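(* Let $\Theta$ be a set of hypotheses, $q:\Theta\to\mathbb{R}^k$ a feature map, $\hat L$ the training loss and $V$ the validation loss. Suppose there exist a vector $\lambda^*\in\mathbb{R}^k$ and a scalar $\alpha^*>0$ such that \[ \alpha^*V(\theta)=\hat L(\theta)+\lambda^*\cdot q(\theta)\quad\text{for all }\theta\in\Theta. \] Let $\theta_1,\dots,\theta_{k+1}\in\Theta$ be such that the $k+1$ vectors $(V(\theta_i),\hat L(\theta_i))\oplus q(\theta_i)\in\mathbb{R}^{k+2}$ are linearly independent, where $\oplus$ denotes concatenation. Let $D=\{(V(\theta_i),\hat L(\theta_i),q(\theta_i)) : 1\le i\le k+1\}$. Then LearnLinReg$(D)$ returns $(\alpha^*,\lambda^* )$.
   Context: Algorithm LearnLinReg takes tuples $(V_i,\hat L_i,q_i)$, $1\le i\le m$, with $q_i\in\mathbb{R}^k$, and proceeds as follows. 1. Sort and reindex the tuples so that $V_1\le\dots\le V_m$. 2. For $i^*=1,2,\dots,m$ in turn, solve the linear program in variables $\alpha\in\mathbb{R}$, $\lambda\in\mathbb{R}^k$, $\Delta_i,f_i\in\mathbb{R}$: - minimize $\sum_{i=1}^m\Delta_i$, - subject to $\alpha\ge0$; $\Delta_i\ge0$, $f_i=\alpha V_i+\Delta_i$, $f_i=\lambda\cdot q_i+\hat L_i$ and $f_{i^*}\le f_i$ for all $i$. If this LP is feasible, return its optimal $(\alpha,\lambda)$. 3. If no LP is feasible, return an error. *)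

From HB Require Import structures.
From mathcomp Require Import all_boot all_order all_algebra.
Set Implicit Arguments. Unset Strict Implicit. Unset Printing Implicit Defensive.
Import Order.TTheory GRing.Theory Num.Theory.
Local Open Scope ring_scope.

Definition dotv (R : realFieldType) (k : nat) (u v : 'rV[R]_k) : R :=
  \sum_(j < k) u 0 j * v 0 j.

(* Input of LearnLinReg: m tuples (V i, Lhat i, q i), indexed by 'I_m. *)

Definition lp_feasible (R : realFieldType) (m k : nat)
    (V Lh : 'I_m -> R) (q : 'I_m -> 'rV[R]_k) (istar : 'I_m)
    (a : R) (lam : 'rV[R]_k) (Delta f : 'I_m -> R) : Prop :=
  0 <= a /\
  forall i : 'I_m,
    [/\ 0 <= Delta i, f i = a * V i + Delta i,
        f i = dotv lam (q i) + Lh i & f istar <= f i].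

Definition lp_is_feasible (R : realFieldType) (m k : nat)
    (V Lh : 'I_m -> R) (q : 'I_m -> 'rV[R]_k) (istar : 'I_m) : Prop :=
  exists a lam Delta f, @lp_feasible R m k V Lh q istar a lam Delta f.

Definition lp_optimal (R : realFieldType) (m k : nat)
    (V Lh : 'I_m -> R) (q : 'I_m -> 'rV[R]_k) (istar : 'I_m)
    (a : R) (lam : 'rV[R]_k) (Delta f : 'I_m -> R) : Prop :=
  @lp_feasible R m k V Lh q istar a lam Delta f /\
  forall a' lam' Delta' f',
    @lp_feasible R m k V Lh q istar a' lam' Delta' f' ->
    \sum_(i < m) Delta i <= \sum_(i < m) Delta' i.

(* Step 1: s is a sorting reindexing: position p holds tuple s p, V nondecreasing. *)
Definition sorting_perm (R : realFieldType) (m : nat) (V : 'I_m -> R)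
    (s : 'I_m -> 'I_m) : Prop :=
  bijective s /\ forall p p' : 'I_m, (p <= p')%N -> V (s p) <= V (s p').

(* Step 3: with sorting s, no LP is feasible: the algorithm returns an error. *)
Definition LearnLinReg_errors (R : realFieldType) (m k : nat)
    (V Lh : 'I_m -> R) (q : 'I_m -> 'rV[R]_k) (s : 'I_m -> 'I_m) : Prop :=
  forall p : 'I_m, ~ lp_is_feasible V Lh q (s p).

(* Step 2: with sorting s, the algorithm may return (a, lam): the LP at the
   first position p whose LP is feasible has (a, lam) as (part of) an
   optimal solution. *)
Definition LearnLinReg_returns (R : realFieldType) (m k : nat)
    (V Lh : 'I_m -> R) (q : 'I_m -> 'rV[R]_k) (s : 'I_m -> 'I_m)
    (a : R) (lam : 'rV[R]_k) : Prop :=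
  exists p : 'I_m,
    (forall p' : 'I_m, (p' < p)%N -> ~ lp_is_feasible V Lh q (s p')) /\
    lp_is_feasible V Lh q (s p) /\
    exists Delta f, lp_optimal V Lh q (s p) a lam Delta f.

Definition concat_vec (R : realFieldType) (k : nat) (v l : R) (x : 'rV[R]_k)
  : 'rV[R]_(2 + k) :=
  row_mx (\row_(j < 2) (if j == 0 :> nat then v else l)) x.

(* At the pivot of smallest validation loss, the true coefficients
   (astar, lamstar) with all slacks Delta_i = 0 are feasible, so the very first
   LP is feasible and its optimal value is 0.  Hence every optimal (a, lam) also
   has zero slack, i.e. fits a V_i = Lhat_i + lam . q_i exactly on the data.
   Both (a, -1, -lam) and (astar, -1, -lamstar) are then orthogonal to the k+1
   independent data vectors in R^(k+2); that orthogonal complement is a line,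
   and the common coordinate -1 forces the two vectors to coincide. *)

From HB Require Import structures.
From mathcomp Require Import all_boot all_order all_algebra.
From mathcomp Require Import ring.
Set Implicit Arguments.
Unset Strict Implicit.
Unset Printing Implicit Defensive.
Import Order.TTheory GRing.Theory Num.Theory.
Local Open Scope ring_scope.

Lemma ker_rank1_colinear (F : fieldType) (n : nat) (M : 'M[F]_(n, n.+1))
    (w c : 'rV[F]_n.+1) :
  row_free M -> w *m M^T = 0 -> c *m M^T = 0 -> w != 0 -> exists t, c = t *: w.
Proof.
move=> freeM wM cM w_neq0.
have rankK : \rank (kermx M^T) = 1%N.
  by rewrite mxrank_ker mxrank_tr (eqP freeM) subSnn.
have wK : (w <= kermx M^T)%MS by apply/sub_kermxP.
have Kw : (kermx M^T <= w)%MS.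
  by rewrite -(eq_leqif (mxrank_leqif_sup wK)) rankK rank_rV w_neq0.
by apply/sub_rVP; apply: submx_trans Kw; apply/sub_kermxP.
Qed.

Lemma ker_eq_of_coord (F : fieldType) (n : nat) (M : 'M[F]_(n, n.+1))
    (w c : 'rV[F]_n.+1) (j : 'I_n.+1) :
  row_free M -> w *m M^T = 0 -> c *m M^T = 0 -> w 0 j != 0 -> c 0 j = w 0 j ->
  c = w.
Proof.
move=> freeM wM cM wj_neq0 cj.
have w_neq0 : w != 0 by apply: contraNneq wj_neq0 => ->; rewrite mxE.
have [t ct] := ker_rank1_colinear freeM wM cM w_neq0.
suff t1 : t = 1 by rewrite ct t1 scale1r.
by apply: (mulIf wj_neq0); rewrite mul1r -[RHS]cj ct mxE.
Qed.

Lemma dotvC (R : realFieldType) (k : nat) (u v : 'rV[R]_k) :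
  dotv u v = dotv v u.
Proof. by apply: eq_bigr => j _; rewrite mulrC. Qed.

Lemma concat_vec_dot (R : realFieldType) (k : nat) (v l a b : R)
    (x y : 'rV[R]_k) :
  (concat_vec v l x *m (concat_vec a b y)^T) 0 0 = v * a + l * b + dotv x y.
Proof.
rewrite /concat_vec tr_row_mx mul_row_col !mxE !big_ord_recl big_ord0 !mxE /=.
by rewrite addr0; congr (_ + _); apply: eq_bigr => j _; rewrite !mxE.
Qed.

Lemma concat_vec_inj (R : realFieldType) (k : nat) (v l a b : R)
    (x y : 'rV[R]_k) :
  concat_vec v l x = concat_vec a b y -> [/\ v = a, l = b & x = y].
Proof.
rewrite /concat_vec => /eq_row_mx [vl_ab ->]; split=> //.
- by have := congr1 (fun M : 'rV[R]_2 => M 0 0) vl_ab; rewrite !mxE.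
- by have := congr1 (fun M : 'rV[R]_2 => M 0 1) vl_ab; rewrite !mxE.
Qed.

Section ExactFit.

Variables (R : realFieldType) (m k : nat).
Variables (V Lh : 'I_m -> R) (q : 'I_m -> 'rV[R]_k).

Definition exact_fit (a : R) (lam : 'rV[R]_k) : Prop :=
  forall i, a * V i = Lh i + dotv lam (q i).

Definition data_matrix : 'M[R]_(m, 2 + k) :=
  \matrix_i concat_vec (V i) (Lh i) (q i).

Lemma exact_fit_ker (a : R) (lam : 'rV[R]_k) :
  exact_fit a lam -> concat_vec a (-1) (- lam) *m data_matrix^T = 0.
Proof.
move=> fit; apply: trmx_inj; rewrite trmx_mul trmxK trmx0.
apply/matrixP => i j; rewrite ord1 !mxE.
transitivity
  ((concat_vec (V i) (Lh i) (q i) *m (concat_vec a (-1) (- lam))^T) 0 0).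
  by rewrite mxE; apply: eq_bigr => l _; rewrite !mxE.
rewrite concat_vec_dot /dotv; under eq_bigr do rewrite mxE mulrN.
by rewrite sumrN -/(dotv (q i) lam) dotvC mulrC fit; ring.
Qed.

End ExactFit.

Lemma exact_fit_unique (R : realFieldType) (k : nat)
    (V Lh : 'I_k.+1 -> R) (q : 'I_k.+1 -> 'rV[R]_k)
    (a a' : R) (lam lam' : 'rV[R]_k) :
  row_free (data_matrix V Lh q) ->
  exact_fit V Lh q a lam -> exact_fit V Lh q a' lam' -> a = a' /\ lam = lam'.
Proof.
move=> free fit fit'.
pose j : 'I_(2 + k) := lshift k 1.
have coord_j (b : R) (mu : 'rV[R]_k) : concat_vec b (-1) (- mu) 0 j = -1.
  by rewrite /concat_vec row_mxEl mxE.
have := ker_eq_of_coord (n := k.+1) (j := j) free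
  (exact_fit_ker fit') (exact_fit_ker fit).
rewrite !coord_j oppr_eq0 oner_eq0 => /(_ isT erefl) /concat_vec_inj [-> _].
by move/oppr_inj.
Qed.

Section LinearProgram.

Variables (R : realFieldType) (m k : nat).
Variables (V Lh : 'I_m -> R) (q : 'I_m -> 'rV[R]_k).

Lemma exact_fit_lp_feasible (istar : 'I_m) (a : R) (lam : 'rV[R]_k) :
  0 <= a -> exact_fit V Lh q a lam -> (forall i, V istar <= V i) ->
  lp_feasible V Lh q istar a lam (fun _ => 0) (fun i => a * V i).
Proof.
move=> a_ge0 fit Vmin; split=> // i; split=> //.
- by rewrite addr0.
- by rewrite fit addrC.
- by rewrite ler_wpM2l.
Qed.

Lemma lp_optimal_zero_slack (istar : 'I_m) (a : R) (lam : 'rV[R]_k)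
    (f : 'I_m -> R) :
  lp_feasible V Lh q istar a lam (fun _ => 0) f ->
  lp_optimal V Lh q istar a lam (fun _ => 0) f.
Proof.
move=> feas; split=> // a' lam' D' f' [_ feas'].
by rewrite big1 // sumr_ge0 // => i _; case: (feas' i).
Qed.

Lemma lp_optimal_exact_fit (istar : 'I_m) (a0 a : R) (lam0 lam : 'rV[R]_k)
    (f0 D f : 'I_m -> R) :
  lp_feasible V Lh q istar a0 lam0 (fun _ => 0) f0 ->
  lp_optimal V Lh q istar a lam D f -> exact_fit V Lh q a lam.
Proof.
move=> feas0 [[_ feas] opt] i.
have D_ge0 j : 0 <= D j by case: (feas j).
have D0 : D i = 0.
  apply: (psumr_eq0P (P := predT) (fun j _ => D_ge0 j)) => //.
  apply/le_anti; rewrite sumr_ge0 // andbT.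
  by have := opt _ _ _ _ feas0; rewrite big1_eq.
by case: (feas i) => _; rewrite D0 addr0 addrC => <- ->.
Qed.

End LinearProgram.

Section Algorithm.

Variables (R : realFieldType) (n k : nat).
Variables (V Lh : 'I_n.+1 -> R) (q : 'I_n.+1 -> 'rV[R]_k).
Variable s : 'I_n.+1 -> 'I_n.+1.

Lemma sorting_perm_min : sorting_perm V s -> forall i, V (s ord0) <= V i.
Proof. by move=> [[? _ s_sinv] Vmono] i; rewrite -[i]s_sinv Vmono. Qed.

Lemma LearnLinReg_returns_first (a : R) (lam : 'rV[R]_k) (D f : 'I_n.+1 -> R) :
  lp_optimal V Lh q (s ord0) a lam D f -> LearnLinReg_returns V Lh q s a lam.
Proof.
move=> opt; exists ord0; split=> [p|]; first by rewrite ltn0.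
by split; [exists a, lam, D, f; case: opt | exists D, f].
Qed.

Lemma LearnLinReg_returns_at_first (a : R) (lam : 'rV[R]_k) :
  lp_is_feasible V Lh q (s ord0) -> LearnLinReg_returns V Lh q s a lam ->
  exists D f, lp_optimal V Lh q (s ord0) a lam D f.
Proof.
move=> feas0 [p [before [_ opt]]].
have p0 : p = ord0.
  by apply/val_inj; case: (posnP p) => // p_gt0; case: (before ord0 p_gt0 feas0).
by rewrite -p0.
Qed.

End Algorithm.

Theorem theorem1 (R : realFieldType) (k : nat) (Theta : Type)
    (q : Theta -> 'rV[R]_k) (Lhat V : Theta -> R)
    (lamstar : 'rV[R]_k) (astar : R)
    (hastar : 0 < astar)
    (hrel : forall th : Theta, astar * V th = Lhat th + dotv lamstar (q th))
    (th : 'I_k.+1 -> Theta)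
    (hindep : row_free
       (\matrix_(i < k.+1) concat_vec (V (th i)) (Lhat (th i)) (q (th i)))) :
  let VD := fun i => V (th i) in
  let LD := fun i => Lhat (th i) in
  let qD := fun i => q (th i) in
  forall s : 'I_k.+1 -> 'I_k.+1, sorting_perm VD s ->
    ~ LearnLinReg_errors VD LD qD s /\
    (exists a lam, LearnLinReg_returns VD LD qD s a lam) /\
    (forall a lam, LearnLinReg_returns VD LD qD s a lam ->
       a = astar /\ lam = lamstar).
Proof.
move=> VD LD qD s sorted.
have fit_star : exact_fit VD LD qD astar lamstar := fun i => hrel (th i).
have feas :=
  exact_fit_lp_feasible (ltW hastar) fit_star (sorting_perm_min sorted).
have feasible : lp_is_feasible VD LD qD (s ord0).
  by exists astar, lamstar, (fun _ => 0), (fun i => astar * VD i).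
split; first by move/(_ ord0).
split.
  exists astar, lamstar.
  exact: LearnLinReg_returns_first (lp_optimal_zero_slack feas).
move=> a lam /(LearnLinReg_returns_at_first feasible) [D [f opt]].
exact: exact_fit_unique hindep (lp_optimal_exact_fit feas opt) fit_star.
Qed.
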